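(* Let $(M,J)$ be a closed almost complex manifold. $J$ being pure is equivalent to $\iota_{1,1}$ being injective, which is also equivalent to $\iota_{(2,0),(0,2)}$ being injective. If $J$ is full then both $\iota_{1,1}$ and $\iota_{(2,0),(0,2)}$ are surjective. Consequently, if $J$ is pure and full, then both $\iota_{1,1}$ and $\iota_{(2,0),(0,2)}$ are isomorphisms.
   Context: $\mathcal E_2(M)$ is the space of real 2-currents (continuous linear functionals on smooth real 2-forms with the $C^\infty$ topology), with boundary operator $d$ dual to exterior derivative. It splits as $\mathcal E_{1,1}\oplus\mathcal E_{(2,0),(0,2)}$, where $\mathcal E_{1,1}$ (resp. $\mathcal E_{(2,0),(0,2)}$) consists of currents vanishing on all real 2-forms $\alpha$ with $\alpha(Jv,Jw)=-\alpha(v,w)$ (resp. $=\alpha(v,w)$); $\pi_{1,1},\pi_{(2,0),(0,2)}$ are the projections. $\mathcal Z\subset\mathcal E_2(M)$ is the space of closed 2-currents and $\mathcal B=d\mathcal E_3(M)$ the boundaries; for $S=(1,1)$ or $(2,0),(0,2)$, $\mathcal Z_S=\mathcal Z\cap\mathcal E_S$, $\mathcal B_S=\mathcal B\cap\mathcal E_S$, and $\iota_S:\mathcal Z_S/\mathcal B_S\to\pi_S\mathcal Z/\pi_S\mathcal B$ is induced by inclusion. $H^J_S(M)_{\mathbb R}=\mathcal Z_S/\mathcal B_S$, viewed as a subspace of de Rham homology $H_2(M;\mathbb R)=\mathcal Z/\mathcal B$. $J$ is pure if $H^J_{1,1}(M)_{\mathbb R}\cap H^J_{(2,0),(0,2)}(M)_{\mathbb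 R}=0$, and full if $H^J_{1,1}(M)_{\mathbb R}+H^J_{(2,0),(0,2)}(M)_{\mathbb R}=H_2(M;\mathbb R)$. *)

From HB Require Import structures.
From mathcomp Require Import all_boot all_order all_algebra.
Set Implicit Arguments. Unset Strict Implicit. Unset Printing Implicit Defensive.
Import GRing.Theory.
Local Open Scope ring_scope.

Section Currents.
Variables (R : realFieldType) (E1 E2 E3 : lmodType R).
Variables (d2 : E2 -> E1) (d3 : E3 -> E2).

(* Z = closed 2-currents, B = boundaries d E_3 *)
Definition cyc (x : E2) : Prop := d2 x = 0.
Definition bdry (x : E2) : Prop := exists y : E3, x = d3 y.

(* E_S = image of the projection pS (pS x = x);  Z_S = Z ∩ E_S, B_S = B ∩ E_S *)
Definition cycS (pS : E2 -> E2) (x : E2) : Prop := cyc x /\ pS x = x.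
Definition bdryS (pS : E2 -> E2) (x : E2) : Prop := bdry x /\ pS x = x.
Definition piZ (pS : E2 -> E2) (w : E2) : Prop := exists z, cyc z /\ w = pS z.
Definition piB (pS : E2 -> E2) (w : E2) : Prop := exists b : E3, w = pS (d3 b).

(* iota_S : Z_S/B_S -> pi_S Z / pi_S B, [x] |-> [x].
   Two classes [x],[y] (x,y in Z_S) are equal in the target iff x - y in pi_S B,
   and equal in the source iff x - y in B_S. *)
Definition iota_injective (pS : E2 -> E2) : Prop :=
  forall x y, cycS pS x -> cycS pS y -> piB pS (x - y) -> bdryS pS (x - y).
Definition iota_surjective (pS : E2 -> E2) : Prop :=
  forall w, piZ pS w -> exists x, cycS pS x /\ piB pS (w - x).

(* H_S = (Z_S + B)/B inside H_2 = Z/B. *)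
(* pure: H_{1,1} ∩ H_{(2,0),(0,2)} = 0 *)
Definition pure (p11 p20 : E2 -> E2) : Prop :=
  forall x y, cycS p11 x -> cycS p20 y -> bdry (x - y) -> bdry x.
(* full: H_{1,1} + H_{(2,0),(0,2)} = H_2 *)
Definition full (p11 p20 : E2 -> E2) : Prop :=
  forall z, cyc z -> exists x y, [/\ cycS p11 x, cycS p20 y & bdry (z - (x + y))].

End Currents.

(* Write p for the projection onto one type and q = 1 - p for the other.  A
   class of Z_p that dies in p Z / p B is x = p (d b) for a boundary d b, and
   then q (d b) = d b - x is a closed current of type q homologous to -x: so
   iota_p fails to be injective exactly when some nonzero class of type p is
   also of type q.  If the two types span H_2, any z is homologous to x + y
   with x, y of types p, q, and applying p gives p z = x modulo p B.  Purity
   and fullness are symmetric in the two types, so each claim for (2,0),(0,2)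
   is the claim for (1,1) with the roles swapped. *)
From HB Require Import structures.
From mathcomp Require Import all_boot all_order all_algebra.
Set Implicit Arguments.
Unset Strict Implicit.
Unset Printing Implicit Defensive.
Import GRing.Theory.
Local Open Scope ring_scope.

Section Boundaries.
Variables (R : realFieldType) (E1 E2 E3 : lmodType R).
Variables (d2 : {linear E2 -> E1}) (d3 : {linear E3 -> E2}).

Lemma bdryD (u v : E2) : bdry d3 u -> bdry d3 v -> bdry d3 (u + v).
Proof. by move=> [a ->] [b ->]; exists (a + b); rewrite linearD. Qed.

Lemma bdryN (u : E2) : bdry d3 u -> bdry d3 (- u).
Proof. by move=> [a ->]; exists (- a); rewrite linearN. Qed.

Lemma cycB (u v : E2) : cyc d2 u -> cyc d2 v -> cyc d2 (u - v).
Proof. by rewrite /cyc linearB => -> ->; rewrite subrr. Qed.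

Lemma pureC (p q : E2 -> E2) : pure d2 d3 p q -> pure d2 d3 q p.
Proof.
move=> P x y Zx Zy Bxy.
have By : bdry d3 y by apply: (P y x) => //; rewrite -opprB; apply: bdryN.
by rewrite -(subrK y x); apply: bdryD.
Qed.

Lemma fullC (p q : E2 -> E2) : full d2 d3 p q -> full d2 d3 q p.
Proof.
move=> F z Zz; have [x [y [Zx Zy Bz]]] := F z Zz.
by exists y, x; split=> //; rewrite [y + x]addrC.
Qed.

End Boundaries.

Section ComplementaryProjections.
Variables (R : realFieldType) (E1 E2 E3 : lmodType R).
Variables (d2 : {linear E2 -> E1}) (d3 : {linear E3 -> E2}).
Hypothesis dd : forall y : E3, d2 (d3 y) = 0.
Variables (p q : {linear E2 -> E2}).
Hypothesis pq_id : forall x : E2, p x + q x = x.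
Hypothesis p_idem : forall x : E2, p (p x) = p x.

Lemma compl_projE (x : E2) : q x = x - p x.
Proof. by rewrite -{2}(pq_id x) addrC addKr. Qed.

Lemma proj_compl0 (x : E2) : p (q x) = 0.
Proof. by rewrite compl_projE linearB p_idem subrr. Qed.

Lemma compl_proj_idem (x : E2) : q (q x) = q x.
Proof. by rewrite [LHS]compl_projE proj_compl0 subr0. Qed.

Lemma pure_iota_injective : pure d2 d3 p q <-> iota_injective d2 d3 p.
Proof.
split=> [P x y [Zx px] [Zy py] [b xy_pb] | I x y [Zx px] [Zy qy] [b xy_b]].
  have Zxy : cycS d2 p (x - y).
    by split; [apply: cycB | rewrite linearB px py].
  have Zqb : cycS d2 q (- q (d3 b)).
    split; last by rewrite linearN compl_proj_idem.
    by rewrite /cyc linearN compl_projE linearB dd -xy_pb Zxy.1 subrr oppr0.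
  split; last exact: Zxy.2.
  apply: (P _ (- q (d3 b))) => //.
  by exists b; rewrite opprK compl_projE xy_pb addrC addrNK.
have [Bx _] : bdryS d3 p (x - 0).
  apply: I => //; last by exists b; rewrite -xy_b linearB px -qy proj_compl0 !subr0.
  by split; rewrite /cyc linear0.
by rewrite subr0 in Bx.
Qed.

Lemma full_iota_surjective : full d2 d3 p q -> iota_surjective d2 d3 p.
Proof.
move=> F _ [z [Zz ->]]; have [x [y [[Zx px] [Zy qy] [c zc]]]] := F z Zz.
exists x; split=> //; exists c.
by rewrite -zc linearB linearD px -qy proj_compl0 addr0.
Qed.

End ComplementaryProjections.

Theorem lemma2p18 (R : realFieldType) (E1 E2 E3 : lmodType R)
  (d2 : {linear E2 -> E1}) (d3 : {linear E3 -> E2})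
  (p11 p20 : {linear E2 -> E2})
  (dd : forall y : E3, d2 (d3 y) = 0)
  (psum : forall x : E2, p11 x + p20 x = x)
  (pidem : forall x : E2, p11 (p11 x) = p11 x) :
  [/\ (pure d2 d3 p11 p20 <-> iota_injective d2 d3 p11),
      (pure d2 d3 p11 p20 <-> iota_injective d2 d3 p20),
      (full d2 d3 p11 p20 ->
         iota_surjective d2 d3 p11 /\ iota_surjective d2 d3 p20) &
      (pure d2 d3 p11 p20 /\ full d2 d3 p11 p20 ->
         (iota_injective d2 d3 p11 /\ iota_surjective d2 d3 p11) /\
         (iota_injective d2 d3 p20 /\ iota_surjective d2 d3 p20))].
Proof.
have psum' x : p20 x + p11 x = x by rewrite addrC.
have pidem' := compl_proj_idem psum pidem.
have inj11 := pure_iota_injective dd psum pidem.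
have inj20 := pure_iota_injective dd psum' pidem'.
have pure20 : pure d2 d3 p11 p20 <-> iota_injective d2 d3 p20.
  by split=> [/pureC/inj20 | /inj20/pureC].
have surj : full d2 d3 p11 p20 ->
    iota_surjective d2 d3 p11 /\ iota_surjective d2 d3 p20.
  move=> F; split; first exact: full_iota_surjective psum pidem F.
  exact: full_iota_surjective psum' pidem' (fullC F).
split=> // -[P F]; have [S11 S20] := surj F.
by split; split=> //; [apply/inj11 | apply/pure20].
Qed.
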